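(* Every betweenness algebra $\langle A,f,g\rangle$ is a discriminator algebra; specifically, the map $d(a)=f(a,a)+-g(a,a)$ is the unary discriminator on $A$, i.e. $d(0)=0$ and $d(a)=1$ for all $a\neq0$.
   Context: A PS-algebra is $\langle A,f,g\rangle$ where $A$ is a Boolean algebra with at least two elements (operations $+,\cdot,-,0,1$) and $f,g\colon A^2\to A$ satisfy: $f(x,y)=0$ whenever $x=0$ or $y=0$; $f$ is additive in each argument; $g(x,y)=1$ whenever $x=0$ or $y=0$; $g$ is co-additive in each argument ($g(x+x',y)=g(x,y)\cdot g(x',y)$, $g(x,y+y')=g(x,y)\cdot g(x,y')$). A betweenness algebra is a PS-algebra satisfying for all $x,y,z$: (ABT0) $x\leq f(x,x)$; (ABT1$_f$) $f(x,y)\leq f(y,x)$; (ABT1$_g$) $g(x,y)\leq g(y,x)$; (ABT2) $y\cdot f(x,z)\leq f(x\cdot f(x,y),z)$; (ABT3) $f(x,g(x,-y)\cdot y)\leq y$; (wMIA) if $x\neq0$ and $y\neq0$ then $g(x,y)\leq f(x,y)$. *)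

From HB Require Import structures.
From mathcomp Require Import all_boot all_order.
Set Implicit Arguments. Unset Strict Implicit. Unset Printing Implicit Defensive.
Import Order.Theory.
Local Open Scope order_scope.

(* A Boolean algebra is a complemented distributive lattice with top and bottom
   (ctbDistrLatticeType): + is join `|`, . is meet `&`, - is complement ~`,
   0 is \bot, 1 is \top. *)

Definition nontrivial_BA {disp : Order.disp_t} (A : ctbDistrLatticeType disp) : Prop :=
  (\bot : A) != \top.

Definition PS_algebra {disp : Order.disp_t} (A : ctbDistrLatticeType disp)
  (f g : A -> A -> A) : Prop :=
  nontrivial_BA A /\
      (forall x y, x = \bot \/ y = \bot -> f x y = \bot) /\
      (forall x x' y, f (x `|` x') y = f x y `|` f x' y) /\
      (forall x y y', f x (y `|` y') = f x y `|` f x y') /\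
      (forall x y, x = \bot \/ y = \bot -> g x y = \top) /\
      (forall x x' y, g (x `|` x') y = g x y `&` g x' y) /\
      (forall x y y', g x (y `|` y') = g x y `&` g x y').

Definition betweenness_algebra {disp : Order.disp_t} (A : ctbDistrLatticeType disp)
  (f g : A -> A -> A) : Prop :=
  PS_algebra f g /\
      (forall x, x <= f x x) /\
      (forall x y, f x y <= f y x) /\
      (forall x y, g x y <= g y x) /\
      (forall x y z, y `&` f x z <= f (x `&` f x y) z) /\
      (forall x y, f x (g x (~` y) `&` y) <= y) /\
      (forall x y, x != \bot -> y != \bot -> g x y <= f x y).

Definition disc {disp : Order.disp_t} (A : ctbDistrLatticeType disp)
  (f g : A -> A -> A) (a : A) : A :=
  f a a `|` ~` (g a a).

Definition unary_discriminator {disp : Order.disp_t} (A : ctbDistrLatticeType disp)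
  (d : A -> A) : Prop :=
  d \bot = \bot /\ (forall a, a != \bot -> d a = \top).

From mathcomp Require Import all_boot all_order.
Import Order.Theory.
Local Open Scope order_scope.

Lemma join_compl_eq1 (disp : Order.disp_t) (L : ctbDistrLatticeType disp) (x y : L) :
  x <= y -> y `|` ~` x = \top.
Proof. by move=> le_xy; apply/eqP; rewrite eq_le lex1 -(joinxC x) leU2. Qed.

Section Discriminator.

Variables (disp : Order.disp_t) (A : ctbDistrLatticeType disp) (f g : A -> A -> A).

Lemma disc_bot : f \bot \bot = \bot -> g \bot \bot = \top -> disc f g \bot = \bot.
Proof. by rewrite /disc => -> ->; rewrite compl1 joinx0. Qed.

Lemma disc_eq1 (a : A) : g a a <= f a a -> disc f g a = \top.
Proof. exact: join_compl_eq1. Qed.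

End Discriminator.

Theorem corollary39 (disp : Order.disp_t) (A : ctbDistrLatticeType disp)
  (f g : A -> A -> A) :
  betweenness_algebra f g -> unary_discriminator (disc f g).
Proof.
move=> [[_ [f0 [_ [_ [g0 _]]]]] [_ [_ [_ [_ [_ wMIA]]]]]].
split; first by apply: disc_bot; [apply: f0 | apply: g0]; left.
by move=> a a_neq0; apply/disc_eq1/wMIA.
Qed.
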